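(* Let $D,d_1,d_2\in\mathbb{Z}$ and let $T=(T_{r,k})_{r,k\ge 0}$ be a number triangle with $T_{r,0}=T_{0,0}+rd_2$ and $T_{0,k}=T_{0,0}+kd_1$ for all $r,k\ge 0$, with $T_{r,k}\neq 0$ for all $r,k\ge 0$, and with $$T_{r,k}=\frac{T_{r,k-1}\cdot T_{r-1,k}+D}{T_{r-1,k-1}}\quad\text{for all } r,k\ge 1.$$ Then there exist $c,d\in\mathbb{Z}$ such that $T=T(c,d,d_1,d_2)$ (i.e. $T_{r,k}=c+kd_1+rd_2+rkd$ for all $r,k\ge 0$) and $D=cd-d_1d_2$.
   Context: A number triangle is an array of integers $T_{r,k}$ indexed by integers $r,k\ge 0$ ($T_{r,k}$ being the $k$-th entry on the $r$-th major diagonal, row $n$ consisting of the entries with $r+k=n$). For $c,d,d_1,d_2\in\mathbb{Z}$, the Generalized Rascal Triangle $T(c,d,d_1,d_2)$ is the number triangle with $T_{r,k}=c+kd_1+rd_2+rkd$. *)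

From Stdlib Require Import ZArith.
Open Scope Z_scope.

Definition rascal (c d d1 d2 : Z) (r k : nat) : Z :=
  c + Z.of_nat k * d1 + Z.of_nat r * d2 + Z.of_nat r * Z.of_nat k * d.

From Stdlib Require Import ZArith Lia.
Open Scope Z_scope.

(* Every Rascal triangle T(c,d,d1,d2) satisfies the recurrence with
   D = cd - d1 d2, and a triangle with nonzero entries is determined by its
   boundary and D, since the recurrence can be solved for T_{r+1,k+1}.  The
   (0,0) instance of the recurrence fixes d through T_{1,1} and then forces
   D = cd - d1 d2, so T coincides with T(T_{0,0}, d, d1, d2). *)

Definition rascal_recurrence (D : Z) (T : nat -> nat -> Z) : Prop :=
  forall r k : nat, T (S r) (S k) * T r k = T (S r) k * T r (S k) + D.

Lemma rascal_row0 (c d d1 d2 : Z) (k : nat) :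
  rascal c d d1 d2 O k = c + Z.of_nat k * d1.
Proof. unfold rascal; simpl; ring. Qed.

Lemma rascal_col0 (c d d1 d2 : Z) (r : nat) :
  rascal c d d1 d2 r O = c + Z.of_nat r * d2.
Proof. unfold rascal; simpl; ring. Qed.

Lemma rascal_recurrence_rascal (c d d1 d2 : Z) :
  rascal_recurrence (c * d - d1 * d2) (rascal c d d1 d2).
Proof. intros r k; unfold rascal; rewrite !Nat2Z.inj_succ; ring. Qed.

Lemma rascal_recurrence_unique (D : Z) (T U : nat -> nat -> Z) :
  rascal_recurrence D T -> rascal_recurrence D U ->
  (forall r k : nat, U r k <> 0) ->
  (forall k : nat, T O k = U O k) -> (forall r : nat, T r O = U r O) ->
  forall r k : nat, T r k = U r k.
Proof.
  intros recT recU nzU row0 col0 r.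
  induction r as [|r IHr]; [exact row0|].
  intro k; induction k as [|k IHk]; [apply col0|].
  apply (Z.mul_cancel_r _ _ (U r k) (nzU r k)).
  rewrite <- (IHr k) at 1.
  rewrite recT, recU, IHk, !IHr.
  reflexivity.
Qed.

Theorem mainTheorem4 (D d1 d2 : Z) (T : nat -> nat -> Z)
  (hcol : forall r : nat, T r O = T O O + Z.of_nat r * d2)
  (hrow : forall k : nat, T O k = T O O + Z.of_nat k * d1)
  (hnz : forall r k : nat, T r k <> 0)
  (hrec : forall r k : nat,
     T (S r) (S k) * T r k = T (S r) k * T r (S k) + D) :
  exists c d : Z,
    (forall r k : nat, T r k = rascal c d d1 d2 r k) /\ D = c * d - d1 * d2.
Proof.
  set (c := T O O).
  set (d := T 1%nat 1%nat - c - d1 - d2).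
  assert (HD : D = c * d - d1 * d2).
  { pose proof (hrec O O) as H00.
    rewrite (hcol 1%nat), (hrow 1%nat) in H00.
    change (Z.of_nat 1) with 1 in H00; subst d; lia. }
  exists c, d; split; [|exact HD].
  symmetry; revert r k.
  apply (rascal_recurrence_unique D _ T).
  - rewrite HD; apply rascal_recurrence_rascal.
  - exact hrec.
  - exact hnz.
  - intro k; rewrite rascal_row0, hrow; reflexivity.
  - intro r; rewrite rascal_col0, hcol; reflexivity.
Qed.
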